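(* Let $M$ be a modular lattice of finite length. For all $a,b\in M$: (a) if $a\le b$ then $a^*\le b^*$; (a$^\delta$) if $a\le b$ then $a^+\le b^+$; (b) $a\le a^{+*}\le a^*$; (b$^\delta$) $a^+\le a^{*+}\le a$; (c) $a^{*+*}=a^*$; (c$^\delta$) $a^{+*+}=a^+$; (d) if $a=a^{*+}$ and $b=b^{*+}$ then $(a+b)^{*+}=a+b$; (d$^\delta$) if $a=a^{+*}$ and $b=b^{+*}$ then $(a\cdot b)^{+*}=a\cdot b$; (e) $(a+b)^+=a^++b^+$; (e$^\delta$) $(a\cdot b)^*=a^*\cdot b^*$. (Here $a^{*+}$ means $(a^* )^+$, etc.)
   Context: $M$ is a modular lattice of finite length (every chain finite) with join $+$, meet $\cdot$, least element $0$ and greatest element $1$. For $a\in M$: $a^*$ is the join of all elements covering $a$ if $a<1$, and $1^*=1$; $a^+$ is the meet of all elements covered by $a$ if $a>0$, and $0^+=0$. *)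

From HB Require Import structures.
From mathcomp Require Import all_boot all_order.
From Stdlib Require Import ClassicalEpsilon.
Set Implicit Arguments. Unset Strict Implicit. Unset Printing Implicit Defensive.
Import Order.LTheory.
Local Open Scope order_scope.

Section ModLat.
Context {disp : Order.disp_t} {T : tbLatticeType disp}.

Definition modular_lattice : Prop :=
  forall a b c : T, a <= c -> a `|` (b `&` c) = (a `|` b) `&` c.

Definition is_chain (C : T -> Prop) : Prop :=
  forall x y, C x -> C y -> (x <= y) || (y <= x).

Definition finite_length : Prop :=
  forall C : T -> Prop, is_chain C -> exists s : seq T, forall x, C x <-> x \in s.

Definition covers (x y : T) : Prop := x < y /\ ~ (exists z, x < z /\ z < y).

Definition is_lub (P : T -> Prop) (u : T) : Prop :=
  (forall x, P x -> x <= u) /\ (forall v, (forall x, P x -> x <= v) -> u <= v).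
Definition is_glb (P : T -> Prop) (u : T) : Prop :=
  (forall x, P x -> u <= x) /\ (forall v, (forall x, P x -> v <= x) -> v <= u).

(* join / meet of an arbitrary set (exists in a lattice of finite length;
   chosen classically, unique by antisymmetry) *)
Definition bigjoin (P : T -> Prop) : T := epsilon (inhabits \bot) (is_lub P).
Definition bigmeet (P : T -> Prop) : T := epsilon (inhabits \bot) (is_glb P).

Definition star (a : T) : T := if a == \top then \top else bigjoin (covers a).
Definition plus (a : T) : T := if a == \bot then \bot else bigmeet (fun y => covers y a).

End ModLat.

From HB Require Import structures.
From mathcomp Require Import all_boot all_order.
From Stdlib Require Import Classical ClassicalEpsilon.
Set Implicit Arguments. Unset Strict Implicit. Unset Printing Implicit Defensive.
Import Order.LTheory.
Local Open Scope order_scope.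

(* Everything comes in dual pairs: the order dual of a modular lattice of
   finite length is again one, and duality exchanges [star] and [plus].
   Modularity lets a cover [y ⋖ u] be transported down to [m ∧ y ⋖ m] for any
   [m <= u] not below [y].  Using this, an induction over the coatoms of
   [[w, u]] shows that an interval whose bottom is the meet of its coatoms is
   atomistic, and dually.  Since [plus a] is the meet of the coatoms of
   [[plus a, a]], this interval is atomistic, which gives [a <= star (plus a)]
   and hence (b)-(d).  For (e), the interval [[plus a ∨ plus b, a ∨ b]] is a
   join of two atomistic intervals, hence atomistic, hence coatomistic, so
   [plus (a ∨ b)] lies below its bottom. *)

Section Duality.
Context {disp : Order.disp_t} {T : tbLatticeType disp}.

Lemma covers_dual (x y : T) : @covers _ T^d x y <-> covers y x.
Proof.
by split=> -[xy nomid]; split=> // -[z [z1 z2]]; apply: nomid; exists z.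
Qed.

Lemma modular_dual : @modular_lattice _ T -> @modular_lattice _ T^d.
Proof.
move=> Hmod a b c ca.
change ((a : T) `&` ((b : T) `|` (c : T)) = ((a : T) `&` (b : T)) `|` (c : T)).
by rewrite [LHS]meetC [RHS]joinC [(b : T) `|` _]joinC [(a : T) `&` _]meetC Hmod.
Qed.

Lemma finite_length_dual : @finite_length _ T -> @finite_length _ T^d.
Proof. by move=> Hfin C HC; apply: Hfin => x y Cx Cy; rewrite orbC HC. Qed.

End Duality.

Section FiniteLength.
Context {disp : Order.disp_t} {T : tbLatticeType disp}.
Hypothesis Hfin : @finite_length _ T.

Lemma no_strictly_increasing_sequence (f : nat -> T) : ~ (forall n, f n < f n.+1).
Proof.
move=> /Order.NatMonotonyTheory.homo_ltn_lt f_mono.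
have f_inj : injective f.
  by move=> i j fij; apply: contra_eq fij; case: ltngtP => // ij _;
    [rewrite lt_eqF ?f_mono | rewrite gt_eqF ?f_mono].
have [s Hs] : exists s : seq T, forall x, (exists n, x = f n) <-> x \in s.
  apply: Hfin => _ _ [i ->] [j ->].
  by case: (ltngtP i j) => [/f_mono/ltW -> | /f_mono/ltW -> | ->];
    rewrite ?lexx ?orbT.
have : (size (map f (iota 0 (size s).+1)) <= size s)%N.
  apply: uniq_leq_size; first by rewrite (map_inj_uniq f_inj) iota_uniq.
  by move=> _ /mapP [n _ ->]; apply/Hs; exists n.
by rewrite size_map size_iota ltnn.
Qed.

Lemma exists_maximal (P : T -> Prop) x0 :
  P x0 -> exists m, P m /\ forall y, P y -> ~ m < y.
Proof.
move=> Px0; apply: NNPP => no_max.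
have step (m : {x | P x}) : {y : {x | P x} | sval m < sval y}.
  case: m => m Pm; apply: constructive_indefinite_description.
  apply: NNPP => none; apply: no_max; exists m; split=> // y Py my.
  by apply: none; exists (exist _ y Py).
apply: (@no_strictly_increasing_sequence
  (fun n => sval (iter n (fun m => sval (step m)) (exist _ x0 Px0)))) => n.
by rewrite iterS; exact: svalP (step _).
Qed.

Lemma exists_join_lub (P : T -> Prop) :
  exists2 s : seq T, (forall y, y \in s -> P y) & is_lub P (\join_(y <- s) y).
Proof.
pose joins x := exists2 s : seq T, (forall y, y \in s -> P y) & x = \join_(y <- s) y.
have joins0 : joins \bot by exists [::]; rewrite ?big_nil.
have [_ [[s sP ->] s_max]] := exists_maximal joins0.
exists s => //; split=> [p Pp | v Hv]; last first.
  by apply/joinsP_seq => y ys _; apply/Hv/sP.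
case: (boolP (p <= _)) => // pJ; exfalso; apply: (s_max (p `|` \join_(y <- s) y)).
  by exists (p :: s); [move=> y /predU1P [->|/sP] | rewrite big_cons].
by rewrite lt_neqAle leUr andbT; apply: contraNneq pJ => ->; apply: leUl.
Qed.

Lemma bigjoin_lub (P : T -> Prop) : is_lub P (bigjoin P).
Proof.
apply: epsilon_spec; have [s _ ?] := exists_join_lub P.
by exists (\join_(y <- s) y).
Qed.

End FiniteLength.

Section FiniteLengthDual.
Context {disp : Order.disp_t} {T : tbLatticeType disp}.
Hypothesis Hfin : @finite_length _ T.

Lemma exists_meet_glb (P : T -> Prop) :
  exists2 s : seq T, (forall y, y \in s -> P y) & is_glb P (\meet_(y <- s) y).
Proof. exact: (exists_join_lub (finite_length_dual Hfin)). Qed.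

Lemma bigmeet_glb (P : T -> Prop) : is_glb P (bigmeet P).
Proof.
apply: epsilon_spec; have [s _ ?] := exists_meet_glb P.
by exists (\meet_(y <- s) y).
Qed.

Lemma exists_minimal (P : T -> Prop) x0 :
  P x0 -> exists m, P m /\ forall y, P y -> ~ y < m.
Proof. exact: (exists_maximal (finite_length_dual Hfin)). Qed.

End FiniteLengthDual.

Section Star.
Context {disp : Order.disp_t} {T : tbLatticeType disp}.
Hypothesis Hfin : @finite_length _ T.

Lemma exists_covers (a : T) : a != \top -> exists c, covers a c.
Proof.
move=> a_neq1; have a_lt1 : a < \top by rewrite lt_neqAle a_neq1 lex1.
have [c [ac c_min]] := exists_minimal Hfin (P := fun z => a < z) a_lt1.
by exists c; split=> // -[z [az zc]]; apply: (c_min z).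
Qed.

Lemma covers_le_star {a c : T} : covers a c -> c <= star a.
Proof.
rewrite /star; case: eqP => [_ _ | _ ac]; first exact: lex1.
by case: (bigjoin_lub Hfin (covers a)) => + _; apply.
Qed.

Lemma le_star (a : T) : a <= star a.
Proof.
have [-> | /exists_covers [c ac]] := eqVneq a \top; first by rewrite /star eqxx.
exact: le_trans (ltW ac.1) (covers_le_star ac).
Qed.

Lemma star_least (a v : T) :
  a <= v -> (forall c, covers a c -> c <= v) -> star a <= v.
Proof.
rewrite /star; case: eqP => [-> // | _ _].
by case: (bigjoin_lub Hfin (covers a)) => _; apply.
Qed.

End Star.

Section Plus.
Context {disp : Order.disp_t} {T : tbLatticeType disp}.
Hypothesis Hfin : @finite_length _ T.

Lemma star_dual (a : T) : star (a : T^d) = plus a.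
Proof.
rewrite /star /plus; case: eqP => // _.
have [ub least] := bigjoin_lub (finite_length_dual Hfin) (@covers _ T^d a).
have [lb greatest] := bigmeet_glb Hfin (fun y => covers y a).
apply: (@le_anti _ T); apply/andP; split.
- by apply: greatest => y /covers_dual; apply: ub.
- by apply: least => y /covers_dual; apply: lb.
Qed.

Lemma plus_dual (a : T) : plus (a : T^d) = star a.
Proof.
rewrite /star /plus; case: eqP => // _.
have [lb greatest] := bigmeet_glb (finite_length_dual Hfin) (fun y => @covers _ T^d y a).
have [ub least] := bigjoin_lub Hfin (covers a).
apply: le_anti; apply/andP; split.
- by apply: least => y /covers_dual; apply: lb.
- by apply: greatest => y /covers_dual; apply: ub.
Qed.

Lemma plus_le (a : T) : plus a <= a.
Proof. by rewrite -star_dual; apply: (le_star (finite_length_dual Hfin)). Qed.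

Lemma plus_le_covered {y a : T} : covers y a -> plus a <= y.
Proof.
rewrite -star_dual => /covers_dual.
exact: (covers_le_star (finite_length_dual Hfin)).
Qed.

Lemma plus_greatest (a v : T) :
  v <= a -> (forall y, covers y a -> v <= y) -> v <= plus a.
Proof.
rewrite -star_dual => va Hv; apply: (star_least (finite_length_dual Hfin)) => //.
by move=> y /covers_dual; apply: Hv.
Qed.

End Plus.

Lemma covers_between {disp} {T : tbLatticeType disp} (y a z : T) :
  covers y a -> y <= z -> z <= a -> z = y \/ z = a.
Proof.
move=> [ya no_mid] yz za; case: (eqVneq z y) => [|zy]; first by left.
case: (eqVneq z a) => [|za']; first by right.
by exfalso; apply: no_mid; exists z; rewrite !lt_neqAle eq_sym zy za' yz za.
Qed.

Section Modular.
Context {disp : Order.disp_t} {T : tbLatticeType disp}.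
Hypothesis Hmod : @modular_lattice _ T.

Lemma covers_meet (y a b : T) :
  covers y a -> b <= a -> ~~ (b <= y) -> covers (b `&` y) b.
Proof.
move=> ya ba b_nle_y; split.
  by rewrite lt_neqAle leIl andbT; apply: contraNneq b_nle_y => <-; apply: leIr.
move=> [z [byz zb]].
have zy_le_a : z `|` y <= a by rewrite leUx (ltW ya.1) (le_trans (ltW zb) ba).
have [zy_eq_y | zy_eq_a] := covers_between ya (leUr y z) zy_le_a.
  have : z <= b `&` y by rewrite lexI (ltW zb) -zy_eq_y leUl.
  by rewrite (lt_geF byz).
have := Hmod y (ltW zb); rewrite zy_eq_a (meet_r ba) meetC (join_l (ltW byz)).
by move=> z_eq_b; rewrite z_eq_b ltxx in zb.
Qed.

End Modular.

Lemma covers_join {disp} {T : tbLatticeType disp} (Hmod : @modular_lattice _ T)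
  (y c b : T) : covers y c -> y <= b -> ~~ (c <= b) -> covers b (b `|` c).
Proof.
move=> /covers_dual yc yb c_nle_b; apply/covers_dual.
exact: (covers_meet (modular_dual Hmod) yc yb c_nle_b).
Qed.

Lemma star_mono {disp} {T : tbLatticeType disp} (Hmod : @modular_lattice _ T)
  (Hfin : @finite_length _ T) {a b : T} : a <= b -> star a <= star b.
Proof.
move=> ab; apply: (star_least Hfin) => [|c ac].
  exact: le_trans ab (le_star Hfin b).
case: (boolP (c <= b)) => [cb | c_nle_b]; first exact: le_trans cb (le_star Hfin b).
exact: le_trans (leUr c b) (covers_le_star Hfin (covers_join Hmod ac ab c_nle_b)).
Qed.

Lemma plus_mono {disp} {T : tbLatticeType disp} (Hmod : @modular_lattice _ T)
  (Hfin : @finite_length _ T) {a b : T} : a <= b -> plus a <= plus b.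
Proof.
rewrite -!(star_dual Hfin) => ab.
exact: (star_mono (modular_dual Hmod) (finite_length_dual Hfin) ab).
Qed.

Section Intervals.
Context {disp : Order.disp_t} {T : tbLatticeType disp}.

(* [u] is the join of [w] and the covers of [w] below [u]; the join is
   expressed through its upper bounds [J], so no infinitary join is needed. *)
Definition atomistic_interval (w u : T) : Prop := w <= u /\
  forall J, (forall c, covers w c -> c <= u -> c <= J) -> u <= w `|` J.

Definition coatomistic_interval (w u : T) : Prop := w <= u /\
  forall J, (forall y, covers y u -> w <= y -> J <= y) -> u `&` J <= w.

End Intervals.

Lemma atomistic_interval_dual {disp} {T : tbLatticeType disp} (w u : T) :
  @atomistic_interval _ T^d u w <-> coatomistic_interval w u.
Proof.
by split=> -[wu H]; split=> // J HJ; apply: H => y /covers_dual; apply: HJ.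
Qed.

Lemma coatomistic_interval_dual {disp} {T : tbLatticeType disp} (w u : T) :
  @coatomistic_interval _ T^d u w <-> atomistic_interval w u.
Proof.
by split=> -[wu H]; split=> // J HJ; apply: H => y /covers_dual; apply: HJ.
Qed.

Section Coatomistic.
Context {disp : Order.disp_t} {T : tbLatticeType disp}.
Hypotheses (Hmod : @modular_lattice _ T) (Hfin : @finite_length _ T).

Lemma covers_meet_transpose (y u m c : T) :
  covers y u -> m <= u -> ~~ (m <= y) -> covers m c -> c <= u ->
  covers (m `&` y) (c `&` y) /\ m `|` (c `&` y) = c.
Proof.
move=> yu mu m_nle_y mc cu.
have my_eq_u : m `|` y = u.
  have my_le_u : m `|` y <= u by rewrite leUx mu (ltW yu.1).
  have [my_eq_y | //] := covers_between yu (leUr y m) my_le_u.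
  by move: m_nle_y; rewrite -my_eq_y leUl.
have m_cy_eq_c : m `|` (c `&` y) = c.
  by rewrite meetC (Hmod _ (ltW mc.1)) my_eq_u (meet_r cu).
split=> //.
have cy_nle_m : ~~ (c `&` y <= m).
  by apply/negP => cym; move: mc.1; rewrite -m_cy_eq_c (join_l cym) ltxx.
have := covers_meet Hmod mc (leIl c y) cy_nle_m.
by rewrite meetAC (meet_r (ltW mc.1)).
Qed.

Lemma atomistic_meet_coatom (m y u : T) :
  covers y u -> atomistic_interval m u -> atomistic_interval (m `&` y) u.
Proof.
move=> yu [mu m_atom]; split=> [|J HJ]; first exact: le_trans (leIl m y) mu.
case: (boolP (m <= y)) => [my | m_nle_y].
  by rewrite (meet_l my) in HJ *; apply: m_atom.
have mJ : m <= J by apply: HJ (covers_meet Hmod yu mu m_nle_y) mu.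
have uJ : u <= J.
  rewrite -(join_r mJ); apply: m_atom => c mc cu.
  have [cov <-] := covers_meet_transpose yu mu m_nle_y mc cu.
  by rewrite leUx mJ; apply: HJ cov (le_trans (leIl c y) cu).
exact: le_trans uJ (leUr _ _).
Qed.

Lemma atomistic_meet_coatoms (u : T) (s : seq T) :
  (forall y, y \in s -> covers y u) -> atomistic_interval (u `&` \meet_(y <- s) y) u.
Proof.
elim: s => [_ | y s IH s_coatoms].
  by rewrite big_nil meetx1; split=> // J _; apply: leUl.
rewrite big_cons meetCA [y `&` _]meetC; apply: atomistic_meet_coatom.
  by apply: s_coatoms; rewrite mem_head.
by apply: IH => z zs; apply: s_coatoms; rewrite in_cons zs orbT.
Qed.

Lemma coatomistic_atomistic (w u : T) :
  coatomistic_interval w u -> atomistic_interval w u.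
Proof.
move=> [wu w_coatom].
have [s s_coatoms [lb greatest]] :=
  exists_meet_glb Hfin (fun y => covers y u /\ w <= y).
have -> : w = u `&` \meet_(y <- s) y.
  apply: le_anti; rewrite lexI wu greatest /=; last by move=> y [].
  by apply: w_coatom => y yu wy; apply: lb.
by apply: atomistic_meet_coatoms => y /s_coatoms [].
Qed.

End Coatomistic.

Lemma atomistic_coatomistic {disp} {T : tbLatticeType disp}
  (Hmod : @modular_lattice _ T) (Hfin : @finite_length _ T) (w u : T) :
  atomistic_interval w u -> coatomistic_interval w u.
Proof.
move=> /coatomistic_interval_dual w_atom; apply/atomistic_interval_dual.
exact: (coatomistic_atomistic (modular_dual Hmod) (finite_length_dual Hfin) w_atom).
Qed.

Section PlusInterval.
Context {disp : Order.disp_t} {T : tbLatticeType disp}.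
Hypotheses (Hmod : @modular_lattice _ T) (Hfin : @finite_length _ T).

Lemma coatomistic_plus (a : T) : coatomistic_interval (plus a) a.
Proof.
split=> [|J HJ]; first exact: plus_le Hfin a.
apply: (plus_greatest Hfin (leIl a J)) => y ya.
by apply: leIxr; apply: HJ ya (plus_le_covered Hfin ya).
Qed.

Lemma plus_le_coatomistic (w u : T) : coatomistic_interval w u -> plus u <= w.
Proof.
move=> [_ w_coatom]; rewrite -(meet_r (plus_le Hfin u)).
by apply: w_coatom => y yu _; exact: (plus_le_covered Hfin yu).
Qed.

Lemma le_star_plus (a : T) : a <= star (plus a).
Proof.
have [_ atom] := coatomistic_atomistic Hmod Hfin (coatomistic_plus a).
rewrite -(join_r (le_star Hfin (plus a))).
by apply: atom => c pc _; exact: (covers_le_star Hfin pc).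
Qed.

Lemma atomistic_interval_up (x u y : T) :
  atomistic_interval x u -> x <= y -> atomistic_interval y (u `|` y).
Proof.
move=> [xu x_atom] xy; split=> [|J HJ]; first exact: leUr.
have uJ : u <= y `|` J.
  rewrite -(join_r xy) -joinA; apply: x_atom => c xc cu.
  case: (boolP (c <= y)) => [cy | c_nle_y]; first exact: lexUl.
  have cov := covers_join Hmod xc xy c_nle_y.
  apply/lexUr/(le_trans (leUr c y))/HJ => //.
  by rewrite leUx leUr lexUl.
by rewrite leUx uJ leUl.
Qed.

Lemma atomistic_interval_join (w u1 u2 : T) :
  atomistic_interval w u1 -> atomistic_interval w u2 ->
  atomistic_interval w (u1 `|` u2).
Proof.
move=> [wu1 atom1] [wu2 atom2]; split=> [|J HJ]; first exact: lexUl.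
by rewrite leUx atom1 ?atom2 // => c wc cu; apply: HJ wc _;
  [exact: lexUr | exact: lexUl].
Qed.

End PlusInterval.

Section StarPlus.
Context {disp : Order.disp_t} {T : tbLatticeType disp}.
Hypotheses (Hmod : @modular_lattice _ T) (Hfin : @finite_length _ T).

Lemma plus_star_le (a : T) : plus (star a) <= a.
Proof.
have := le_star_plus (modular_dual Hmod) (finite_length_dual Hfin) a.
by rewrite (plus_dual Hfin) (star_dual Hfin).
Qed.

Lemma star_plus_star (a : T) : star (plus (star a)) = star a.
Proof.
apply: le_anti; rewrite le_star_plus // andbT.
exact: (star_mono Hmod Hfin (plus_star_le a)).
Qed.

Lemma plus_star_plus (a : T) : plus (star (plus a)) = plus a.
Proof.
apply: le_anti; rewrite plus_star_le /=.
exact: (plus_mono Hmod Hfin (le_star_plus Hmod Hfin a)).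
Qed.

Lemma plus_star_join (a b : T) : a = plus (star a) -> b = plus (star b) ->
  plus (star (a `|` b)) = a `|` b.
Proof.
have plus_star_mono (x y : T) : x <= y -> plus (star x) <= plus (star y).
  by move=> xy; exact: (plus_mono Hmod Hfin (star_mono Hmod Hfin xy)).
move=> a_closed b_closed; apply: le_anti; rewrite plus_star_le leUx /=.
by apply/andP; split; [rewrite {1}a_closed | rewrite {1}b_closed];
  apply: plus_star_mono; [apply: leUl | apply: leUr].
Qed.

Lemma plus_join (a b : T) : plus (a `|` b) = plus a `|` plus b.
Proof.
apply/le_anti/andP; split; last by rewrite leUx !(plus_mono Hmod Hfin) ?leUl ?leUr.
set w := plus a `|` plus b.
have w_le_ab : w <= a `|` b by apply: leU2; apply: plus_le.
have atom_a := atomistic_interval_up Hmod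
  (coatomistic_atomistic Hmod Hfin (coatomistic_plus Hfin a)) (leUl (plus a) (plus b)).
have atom_b := atomistic_interval_up Hmod
  (coatomistic_atomistic Hmod Hfin (coatomistic_plus Hfin b)) (leUr (plus b) (plus a)).
have := atomistic_interval_join atom_a atom_b.
rewrite joinACA joinxx (join_l w_le_ab) => /(atomistic_coatomistic Hmod Hfin).
exact: (plus_le_coatomistic Hfin).
Qed.

End StarPlus.

Lemma star_plus_meet {disp} {T : tbLatticeType disp} (Hmod : @modular_lattice _ T)
  (Hfin : @finite_length _ T) (a b : T) :
  a = star (plus a) -> b = star (plus b) -> star (plus (a `&` b)) = a `&` b.
Proof.
have := @plus_star_join _ T^d (modular_dual Hmod) (finite_length_dual Hfin) a b.
by rewrite !(star_dual Hfin) !(plus_dual Hfin).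
Qed.

Lemma star_meet {disp} {T : tbLatticeType disp} (Hmod : @modular_lattice _ T)
  (Hfin : @finite_length _ T) (a b : T) : star (a `&` b) = star a `&` star b.
Proof.
have := plus_join (modular_dual Hmod) (finite_length_dual Hfin) a b.
by rewrite !(plus_dual Hfin).
Qed.

Theorem lemma6p1 (disp : Order.disp_t) (M : tbLatticeType disp)
  (Hmod : @modular_lattice disp M) (Hfin : @finite_length disp M) :
  forall a b : M,
    (a <= b -> star a <= star b) /\
    (a <= b -> plus a <= plus b) /\
    (a <= star (plus a) /\ star (plus a) <= star a) /\
    (plus a <= plus (star a) /\ plus (star a) <= a) /\
    star (plus (star a)) = star a /\
    plus (star (plus a)) = plus a /\
    (a = plus (star a) -> b = plus (star b) -> plus (star (a `|` b)) = a `|` b) /\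
    (a = star (plus a) -> b = star (plus b) -> star (plus (a `&` b)) = a `&` b) /\
    plus (a `|` b) = plus a `|` plus b /\
    star (a `&` b) = star a `&` star b.
Proof.
move=> a b; split; first exact: star_mono.
split; first exact: plus_mono.
split; first by rewrite le_star_plus // (star_mono Hmod Hfin (plus_le Hfin a)).
split; first by rewrite plus_star_le // (plus_mono Hmod Hfin (le_star Hfin a)).
split; first exact: star_plus_star.
split; first exact: plus_star_plus.
split; first exact: plus_star_join.
split; first exact: star_plus_meet.
split; first exact: plus_join.
exact: star_meet.
Qed.
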